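(* Write $z=(z_1,\ldots,z_n)\in\mathbb{C}^n$ and let constants $m\ge 2$, $R>0$, $A>0$, $B>0$, $k\in(0,1)$, and $K>0$ be given. Let \[ \widetilde\Omega_m=\Big\{z\in B(0,R) \;\Big|\; r(z)=\operatorname{Re} z_n - A|z_1|^m + B\Big(\sum_{j=2}^n|z_j|^m+|z_n||z|\Big)<0\Big\}. \] Then there exist positive constants $R_1$ and $C$ such that \[ F^K_{\widetilde\Omega_m}(z,X)\le C\frac{|X_n|}{d_{\widetilde\Omega_m}(z)^{1-\frac{1}{2m}}} \] for all $z\in B(0,R_1)\cap\Lambda(k)$ and all $X\in\mathbb{C}^n$ with $|X|\le K|X_n|$.
   Context: $B(z,R)$ denotes the Euclidean ball in $\mathbb{C}^n$ with center $z$ and radius $R$, and $|\cdot|$ the Euclidean norm. For $0<k<1$, $\Lambda(k)=\{z\in\mathbb{C}^n \mid -\operatorname{Re} z_n>k|z|\}$. $d_{\Omega}(z)$ denotes the Euclidean distance from $z$ to the boundary of $\Omega$. For a domain $\Omega\subset\mathbb{C}^n$, $z\in\Omega$ and $X\in\mathbb{C}^n$, the Kobayashi(–Royden) metric is $F^K_\Omega(z,X)=\inf\{1/\lambda \mid \exists f\colon D\to\Omega \text{ holomorphic},\ f(0)=z,\ f'(0)=\lambda X,\ \lambda>0\}$, where $D$ is the unit disc in $\mathbb{C}$. $X_n$ denotes the $n$-th component of $X$. *)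

From Stdlib Require Import Reals List.
From Coquelicot Require Import Coquelicot.
Import ListNotations.
Open Scope R_scope.

(* A point of C^n is represented as a function nat -> C; only the
   components 0 .. n-1 are relevant (component j-1 is z_j of the paper). *)
Definition Cn := nat -> C.

Definition rsum (f : nat -> R) (a len : nat) : R :=
  fold_right Rplus 0 (map f (seq a len)).

Definition cnorm (n : nat) (z : Cn) : R :=
  sqrt (rsum (fun j => (Cmod (z j)) ^ 2) 0 n).

Definition csub (z w : Cn) : Cn := fun j => Cminus (z j) (w j).

Definition ball_n (n : nat) (c : Cn) (r : R) (z : Cn) : Prop :=
  cnorm n (csub z c) < r.

Definition Lambda (n : nat) (k : R) (z : Cn) : Prop :=
  - Re (z (n - 1)%nat) > k * cnorm n z.

Definition rfun (n m : nat) (A B : R) (z : Cn) : R :=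
  Re (z (n - 1)%nat) - A * (Cmod (z 0%nat)) ^ m
  + B * (rsum (fun j => (Cmod (z j)) ^ m) 1 (n - 1)
         + Cmod (z (n - 1)%nat) * cnorm n z).

Definition Omega_m (n m : nat) (R0 A B : R) (z : Cn) : Prop :=
  ball_n n (fun _ => 0%C) R0 z /\ rfun n m A B z < 0.

Definition boundary (n : nat) (Om : Cn -> Prop) (w : Cn) : Prop :=
  forall eps, 0 < eps ->
    (exists u, ball_n n w eps u /\ Om u) /\
    (exists u, ball_n n w eps u /\ ~ Om u).

Definition dist_bd (n : nat) (Om : Cn -> Prop) (z : Cn) : Rbar :=
  Glb_Rbar (fun x => exists w, boundary n Om w /\ x = cnorm n (csub z w)).

Definition Disc (w : C) : Prop := Cmod w < 1.

Definition holo_disc (n : nat) (f : C -> Cn) : Prop :=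
  forall j, (j < n)%nat -> forall w, Disc w ->
    ex_derive (K := C_AbsRing) (V := C_NormedModule) (fun t => f t j) w.

(* Kobayashi-Royden metric F^K_Omega(z, X) (value in Rbar; inf of empty = +oo) *)
Definition kobayashi (n : nat) (Om : Cn -> Prop) (z X : Cn) : Rbar :=
  Glb_Rbar (fun x => exists lam : R, 0 < lam /\ x = / lam /\
    exists f : C -> Cn,
      holo_disc n f /\
      (forall w, Disc w -> Om (f w)) /\
      (forall j, (j < n)%nat -> f (RtoC 0) j = z j) /\
      (forall j, (j < n)%nat ->
         is_derive (K := C_AbsRing) (V := C_NormedModule)
           (fun t => f t j) (RtoC 0 : C) (Cmult (RtoC lam) (X j)))).

(* Write [|z| = q^(2m)].  On [Lambda(k)] one has [Re z_n < -k |z|], while the other terms of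
   [r] are of order [|z|^2]; hence the ball [B(z, k|z|/4)] lies in the domain, and as the
   origin is a boundary point, [d(z)] is comparable to [q^(2m)].  The analytic disc
   [t |-> z + t V + c t^2 e_1] with [|V| <= eps q^(2m-1)] stays in the domain: while
   [|t| <= q/mu] it moves by less than [k|z|/4], and for larger [|t|] its curvature forces
   [|z_1| >= c|t|^2/2], so that [-A|z_1|^m] beats the [O(mu |t|^(2m))] perturbation.
   Thus [F(z,X) <= K |X_n| / (eps q^(2m-1)) <= C |X_n| / d(z)^(1-1/(2m))]. *)

From Stdlib Require Import Reals Lra Lia Psatz FunctionalExtensionality.
From Coquelicot Require Import Coquelicot.
Open Scope R_scope.

Lemma Rle_pow_le1 x p1 p2 : 0 <= x <= 1 -> (p1 <= p2)%nat -> x ^ p2 <= x ^ p1.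
Proof.
  intros Hx Hp. replace p2 with (p1 + (p2 - p1))%nat by lia. rewrite pow_add.
  assert (0 <= x ^ p1) by (apply pow_le; lra).
  assert (x ^ (p2 - p1) <= 1) by (rewrite <- (pow1 (p2 - p1)); apply pow_incr; lra).
  nra.
Qed.

Lemma pow_pred x p : (1 <= p)%nat -> x ^ p = x * x ^ (p - 1).
Proof. intro Hp. replace p with (S (p - 1)) at 1 by lia. reflexivity. Qed.

Lemma INR_pred_add1 n : (1 <= n)%nat -> INR (n - 1) + 1 = INR n.
Proof. intro Hn. rewrite <- S_INR. f_equal. lia. Qed.

Lemma exists_pos_below3 a b c : 0 < a -> 0 < b -> 0 < c ->
  exists x, 0 < x /\ x <= a /\ x <= b /\ x <= c.
Proof.
  intros Ha Hb Hc. exists (Rmin a (Rmin b c)). repeat split.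
  - repeat apply Rmin_pos; assumption.
  - apply Rmin_l.
  - eapply Rle_trans; [apply Rmin_r | apply Rmin_l].
  - eapply Rle_trans; [apply Rmin_r | apply Rmin_r].
Qed.

Lemma rsumS f a len : rsum f a (S len) = f a + rsum f (S a) len.
Proof. reflexivity. Qed.

Lemma rsum_nonneg f a len : (forall j, 0 <= f j) -> 0 <= rsum f a len.
Proof.
  intro Hf. revert a. induction len as [|len IH]; intro a; [unfold rsum; simpl; lra|].
  rewrite rsumS. specialize (IH (S a)). specialize (Hf a). lra.
Qed.

Lemma rsum_le f g a len : (forall j, (a <= j < a + len)%nat -> f j <= g j) ->
  rsum f a len <= rsum g a len.
Proof.
  revert a. induction len as [|len IH]; intros a Hfg; [unfold rsum; simpl; lra|].
  rewrite !rsumS. assert (f a <= g a) by (apply Hfg; lia).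
  assert (rsum f (S a) len <= rsum g (S a) len) by (apply IH; intros; apply Hfg; lia).
  lra.
Qed.

Lemma rsum_const c a len : rsum (fun _ => c) a len = INR len * c.
Proof.
  revert a. induction len as [|len IH]; intro a; [unfold rsum; simpl; lra|].
  rewrite rsumS, IH, S_INR. ring.
Qed.

Lemma rsum_ge_term f a len j : (forall i, 0 <= f i) -> (a <= j < a + len)%nat ->
  f j <= rsum f a len.
Proof.
  intro Hf. revert a. induction len as [|len IH]; intros a Hj; [lia|].
  rewrite rsumS. destruct (Nat.eq_dec j a) as [->|Hne].
  - pose proof (rsum_nonneg f (S a) len Hf). lra.
  - pose proof (IH (S a) ltac:(lia)). specialize (Hf a). lra.
Qed.

Lemma rsum_sqr_le f a len : (forall i, 0 <= f i) ->
  rsum (fun j => f j ^ 2) a len <= rsum f a len ^ 2.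
Proof.
  intro Hf. revert a. induction len as [|len IH]; intro a; [unfold rsum; simpl; lra|].
  rewrite !rsumS. specialize (IH (S a)). pose proof (rsum_nonneg f (S a) len Hf).
  specialize (Hf a). nra.
Qed.

Lemma rsum_split_first f n : (1 <= n)%nat -> rsum f 0 n = f 0%nat + rsum f 1 (n - 1).
Proof. intro Hn. destruct n as [|n]; [lia|]. rewrite rsumS. do 2 f_equal. lia. Qed.

Lemma cnorm_nonneg n z : 0 <= cnorm n z.
Proof. apply sqrt_pos. Qed.

Lemma Cmod_le_cnorm n z j : (j < n)%nat -> Cmod (z j) <= cnorm n z.
Proof.
  intro Hj. unfold cnorm. rewrite <- (sqrt_pow2 (Cmod (z j))) by apply Cmod_ge_0.
  apply sqrt_le_1_alt, (rsum_ge_term (fun i => Cmod (z i) ^ 2)); [|lia].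
  intro; apply pow2_ge_0.
Qed.

Lemma cnorm_le_rsum n z : cnorm n z <= rsum (fun j => Cmod (z j)) 0 n.
Proof.
  assert (Hf : forall j, 0 <= Cmod (z j)) by (intro; apply Cmod_ge_0).
  unfold cnorm. rewrite <- (sqrt_pow2 (rsum (fun j => Cmod (z j)) 0 n))
    by (apply rsum_nonneg, Hf).
  apply sqrt_le_1_alt, (rsum_sqr_le (fun j => Cmod (z j))), Hf.
Qed.

Lemma cnorm_le_head n z beta : (1 <= n)%nat ->
  (forall j, (1 <= j <= n - 1)%nat -> Cmod (z j) <= beta) ->
  cnorm n z <= Cmod (z 0%nat) + INR (n - 1) * beta.
Proof.
  intros Hn Hb. eapply Rle_trans; [apply cnorm_le_rsum|].
  rewrite rsum_split_first, <- (rsum_const beta 1) by exact Hn.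
  assert (rsum (fun j => Cmod (z j)) 1 (n - 1) <= rsum (fun _ => beta) 1 (n - 1))
    by (apply rsum_le; intros; apply Hb; lia).
  lra.
Qed.

Lemma ball_n_0 n r z : ball_n n (fun _ => 0%C) r z <-> cnorm n z < r.
Proof.
  unfold ball_n. replace (csub z (fun _ => 0%C)) with z; [tauto|].
  unfold csub. apply functional_extensionality. intro j. ring.
Qed.

Lemma Re_add_le_Cmod (a b : C) : Re (a + b) <= Re a + Cmod b.
Proof. rewrite re_plus. pose proof (re_le_Cmod b). pose proof (Rle_abs (Re b)). lra. Qed.

Lemma Lambda_cnorm_pos n k z : (1 <= n)%nat -> Lambda n k z -> 0 < cnorm n z.
Proof.
  unfold Lambda. intros Hn HL.
  pose proof (Cmod_le_cnorm n z (n - 1) ltac:(lia)).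
  pose proof (re_le_Cmod (z (n - 1)%nat)). pose proof (Rle_abs (- Re (z (n - 1)%nat))).
  rewrite Rabs_Ropp in *.
  destruct (Rle_lt_or_eq_dec 0 (cnorm n z) (cnorm_nonneg n z)) as [|Hz]; [assumption|].
  rewrite <- Hz in *. lra.
Qed.

Lemma rfun_le n m A B u beta rho : (2 <= n)%nat -> 0 <= B ->
  (forall j, (1 <= j <= n - 1)%nat -> Cmod (u j) <= beta) -> Re (u (n - 1)%nat) <= rho ->
  rfun n m A B u <= rho - A * Cmod (u 0%nat) ^ m
    + B * (INR (n - 1) * beta ^ m + beta * (Cmod (u 0%nat) + INR (n - 1) * beta)).
Proof.
  intros Hn HB Hb Hre. unfold rfun.
  assert (Hsum : rsum (fun j => Cmod (u j) ^ m) 1 (n - 1) <= INR (n - 1) * beta ^ m).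
  { rewrite <- rsum_const with (a := 1%nat). apply rsum_le. intros.
    apply pow_incr. split; [apply Cmod_ge_0 | apply Hb; lia]. }
  pose proof (cnorm_le_head n u beta ltac:(lia) Hb).
  pose proof (cnorm_nonneg n u).
  assert (Cmod (u (n - 1)%nat) * cnorm n u <= beta * (Cmod (u 0%nat) + INR (n - 1) * beta)).
  { apply Rmult_le_compat; try apply Cmod_ge_0; try lra. apply Hb. lia. }
  nra.
Qed.

Lemma rfun_ge n m A B u : 0 <= B ->
  Re (u (n - 1)%nat) - A * Cmod (u 0%nat) ^ m <= rfun n m A B u.
Proof.
  intro HB. unfold rfun.
  assert (0 <= rsum (fun j => Cmod (u j) ^ m) 1 (n - 1))
    by (apply rsum_nonneg; intro; apply pow_le, Cmod_ge_0).
  pose proof (Rmult_le_pos _ _ (Cmod_ge_0 (u (n - 1)%nat)) (cnorm_nonneg n u)).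
  nra.
Qed.

Lemma Rpower_inv_pow s p : 0 < s -> (1 <= p)%nat -> Rpower s (/ INR p) ^ p = s.
Proof.
  intros Hs Hp. assert (0 < INR p) by (apply lt_0_INR; lia).
  rewrite <- Rpower_pow by (unfold Rpower; apply exp_pos).
  rewrite Rpower_mult, Rinv_l by lra. apply Rpower_1, Hs.
Qed.

Lemma Rpower_le_pow_pred d q p : (1 <= p)%nat -> 0 < q -> 0 < d <= q ^ p ->
  Rpower d (1 - / INR p) <= q ^ (p - 1).
Proof.
  intros Hp Hq Hd. assert (1 <= INR p) by (apply (le_INR 1); lia).
  apply Rle_trans with (Rpower (q ^ p) (1 - / INR p)).
  - apply Rle_Rpower_l; [|lra].
    assert (/ INR p <= 1) by (rewrite <- Rinv_1; apply Rinv_le_contravar; lra). lra.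
  - rewrite <- !Rpower_pow, Rpower_mult, minus_INR by (assumption || lia).
    right. f_equal. simpl. field. lra.
Qed.

Lemma exists_disc_width B k R0 : 0 < B -> 0 < k -> 0 < R0 ->
  exists c, 0 < c <= 1 /\ 2 * B * c <= k / 4 /\ c <= R0 / 2.
Proof.
  intros HB Hk HR0.
  destruct (exists_pos_below3 1 (k / (8 * B)) (R0 / 2)) as (c & Hc0 & Hc1 & Hc2 & Hc3);
    try (apply Rdiv_lt_0_compat; lra); try lra.
  exists c. repeat split; try lra.
  apply Rle_trans with (2 * B * (k / (8 * B))); [apply Rmult_le_compat_l; lra | right; field; lra].
Qed.

Lemma exists_disc_speed n m A B c : 0 < A -> 0 < B -> 0 < c ->
  exists mu, 0 < mu <= c / 4 /\
    mu * (1 + B * INR n * 2 ^ m + 2 * B * (c + 2 * INR n)) <= A * (c / 2) ^ m / 2.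
Proof.
  intros HA HB Hc. set (M := 1 + B * INR n * 2 ^ m + 2 * B * (c + 2 * INR n)).
  assert (HM : 0 < M).
  { pose proof (pos_INR n). assert (0 < 2 ^ m) by (apply pow_lt; lra).
    assert (0 <= B * INR n * 2 ^ m) by (apply Rmult_le_pos; [apply Rmult_le_pos|]; lra).
    unfold M. nra. }
  assert (0 < A * (c / 2) ^ m) by (apply Rmult_lt_0_compat; [|apply pow_lt]; lra).
  exists (Rmin (c / 4) (A * (c / 2) ^ m / (2 * M))). repeat split.
  - apply Rmin_pos; apply Rdiv_lt_0_compat; lra.
  - apply Rmin_l.
  - apply Rle_trans with (A * (c / 2) ^ m / (2 * M) * M).
    + apply Rmult_le_compat_r; [lra | apply Rmin_r].
    + right. field. lra.
Qed.

Lemma exists_small_scale n m B k R0 : (1 <= n)%nat -> 0 < B -> 0 < k -> 0 < R0 ->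
  exists q0, 0 < q0 <= 1 /\ B * q0 * (2 ^ m * INR n + 4 * INR n) <= k / 4 /\
    8 * INR n * q0 <= R0.
Proof.
  intros Hn HB Hk HR0. assert (HN : 0 < INR n) by (apply lt_0_INR; lia).
  set (L := B * (2 ^ m * INR n + 4 * INR n)).
  assert (HL : 0 < L).
  { unfold L. assert (0 < 2 ^ m) by (apply pow_lt; lra).
    apply Rmult_lt_0_compat; [lra|]. nra. }
  destruct (exists_pos_below3 1 (k / (4 * L)) (R0 / (8 * INR n)))
    as (q0 & Hq0 & Hq1 & Hq2 & Hq3); try (apply Rdiv_lt_0_compat; lra); try lra.
  exists q0. repeat split; try lra.
  - replace (B * q0 * (2 ^ m * INR n + 4 * INR n)) with (L * q0) by (unfold L; ring).
    apply Rle_trans with (L * (k / (4 * L))); [apply Rmult_le_compat_l; lra | right; field; lra].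
  - apply Rle_trans with (8 * INR n * (R0 / (8 * INR n)));
      [apply Rmult_le_compat_l; lra | right; field; lra].
Qed.

Lemma kobayashi_le_inv n Om z X (f : C -> Cn) lam : 0 < lam -> holo_disc n f ->
  (forall w, Disc w -> Om (f w)) -> (forall j, (j < n)%nat -> f (RtoC 0) j = z j) ->
  (forall j, (j < n)%nat ->
     is_derive (K := C_AbsRing) (V := C_NormedModule) (fun t => f t j) (RtoC 0 : C)
       (Cmult (RtoC lam) (X j))) ->
  Rbar_le (kobayashi n Om z X) (Finite (/ lam)).
Proof.
  intros Hlam Hf HOm H0 Hd. unfold kobayashi.
  apply (proj1 (Glb_Rbar_correct _)).
  exists lam. repeat split; [exact Hlam|]. exists f. tauto.
Qed.

Lemma Rbar_le_0_of_le_inv (x : Rbar) :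
  (forall lam, 0 < lam -> Rbar_le x (Finite (/ lam))) -> Rbar_le x (Finite 0).
Proof.
  intro Hx. destruct x as [r| |]; simpl; [| exact (Hx 1 Rlt_0_1) | exact I].
  destruct (Rle_or_lt r 0) as [|Hr]; [assumption|].
  specialize (Hx (2 / r) ltac:(apply Rdiv_lt_0_compat; lra)). simpl in Hx.
  replace (/ (2 / r)) with (r / 2) in Hx by (field; lra). lra.
Qed.

Definition quadratic_disc (z V : Cn) (c : R) : C -> Cn :=
  fun t j => (z j + t * V j + RtoC (if Nat.eqb j 0 then c else 0) * (t * t))%C.

Lemma is_derive_quadratic (a b c x : C) :
  is_derive (K := C_AbsRing) (V := C_NormedModule) (fun t => (a + t * b + c * (t * t))%C) x
    (b + c * (x + x))%C.
Proof.
  pose proof (is_derive_id (K := C_AbsRing) x) as Hid.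
  pose proof (is_derive_mult (K := C_AbsRing) _ _ x _ _ Hid Hid Cmult_comm) as Hsq.
  pose proof (is_derive_scal_l (K := C_AbsRing) (V := C_NormedModule) _ x _ c Hsq) as Hc.
  pose proof (is_derive_scal_l (K := C_AbsRing) (V := C_NormedModule) _ x _ b Hid) as Hb.
  pose proof (is_derive_const (K := C_AbsRing) (V := C_NormedModule) a x) as Ha.
  pose proof (is_derive_plus _ _ _ _ _ (is_derive_plus _ _ _ _ _ Ha Hb) Hc) as H.
  eapply is_derive_ext; swap 1 2.
  - replace (b + c * (x + x))%C
      with (plus (plus zero (scal one b)) (scal (plus (mult one x) (mult x one)) c)).
    + exact H.
    + change (0 + 1 * b + (1 * x + x * 1) * c = b + c * (x + x))%C. ring.
  - intro t. change (a + t * b + (t * t) * c = a + t * b + c * (t * t))%C. ring.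
Qed.

Lemma quadratic_disc_holo n z V c : holo_disc n (quadratic_disc z V c).
Proof. intros j _ w _. eexists. apply is_derive_quadratic. Qed.

Lemma quadratic_disc_0 z V c j : quadratic_disc z V c (RtoC 0) j = z j.
Proof. unfold quadratic_disc. ring. Qed.

Lemma quadratic_disc_derive_0 z V c j :
  is_derive (K := C_AbsRing) (V := C_NormedModule) (fun t => quadratic_disc z V c t j)
    (RtoC 0 : C) (V j).
Proof.
  replace (V j) with (V j + RtoC (if Nat.eqb j 0 then c else 0) * (RtoC 0 + RtoC 0))%C
    by ring.
  apply is_derive_quadratic.
Qed.

Lemma quadratic_disc_tail z V c t j : j <> 0%nat -> quadratic_disc z V c t j = (z j + t * V j)%C.
Proof.
  intro Hj. unfold quadratic_disc. apply Nat.eqb_neq in Hj. rewrite Hj. ring.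
Qed.

Lemma quadratic_disc_first_Cmod z V c t : 0 <= c ->
  c * Cmod t ^ 2 - Cmod (z 0%nat) - Cmod (t * V 0%nat) <= Cmod (quadratic_disc z V c t 0%nat)
  <= Cmod (z 0%nat) + Cmod (t * V 0%nat) + c * Cmod t ^ 2.
Proof.
  intro Hc. set (u := quadratic_disc z V c t 0%nat).
  assert (Hquad : Cmod (RtoC c * (t * t)) = c * Cmod t ^ 2)
    by (rewrite !Cmod_mult, Cmod_R, Rabs_pos_eq by lra; ring).
  assert (Hu : u = (z 0%nat + t * V 0%nat + RtoC c * (t * t))%C) by reflexivity.
  pose proof (Cmod_triangle (z 0%nat) (t * V 0%nat)).
  pose proof (Cmod_triangle (z 0%nat + t * V 0%nat) (RtoC c * (t * t))).
  pose proof (Cmod_triangle u (- (z 0%nat + t * V 0%nat))).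
  replace (u + - (z 0%nat + t * V 0%nat))%C with (RtoC c * (t * t))%C in * by (rewrite Hu; ring).
  rewrite Cmod_opp, Hquad in *. rewrite <- Hu in *. lra.
Qed.

Definition last_axis (n : nat) (t : R) : Cn :=
  fun j => if Nat.eqb j (n - 1) then RtoC t else 0%C.

Lemma last_axis_Cmod n t j : Cmod (last_axis n t j) <= Rabs t.
Proof.
  unfold last_axis. destruct (Nat.eqb j (n - 1)).
  - rewrite Cmod_R. lra.
  - rewrite Cmod_0. apply Rabs_pos.
Qed.

Lemma last_axis_first n t : (2 <= n)%nat -> last_axis n t 0%nat = 0%C.
Proof.
  intro Hn. unfold last_axis.
  replace (Nat.eqb 0 (n - 1)) with false by (symmetry; apply Nat.eqb_neq; lia).
  reflexivity.
Qed.

Lemma last_axis_last n t : Re (last_axis n t (n - 1)%nat) = t.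
Proof. unfold last_axis. rewrite Nat.eqb_refl. reflexivity. Qed.

(* Along the negative [Re z_n]-axis, [r] is [-d + O(d^2)]; along the positive one it is positive. *)
Lemma boundary_origin n m R0 A B : (2 <= n)%nat -> (2 <= m)%nat -> 0 < R0 -> 0 < B ->
  boundary n (Omega_m n m R0 A B) (fun _ => 0%C).
Proof.
  intros Hn Hm HR0 HB eps Heps.
  assert (HN : 1 < INR n) by (apply lt_1_INR; lia).
  pose proof (INR_pred_add1 n ltac:(lia)).
  assert (Hcn : 0 < Rmin eps R0 / (2 * INR n))
    by (apply Rdiv_lt_0_compat; [apply Rmin_pos|]; lra).
  destruct (exists_pos_below3 1 (Rmin eps R0 / (2 * INR n)) (/ (4 * B * INR n)))
    as (d & Hd0 & Hd1 & Hd2 & Hd3); try lra; [apply Rinv_0_lt_compat; nra|].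
  assert (Hnd : INR n * d <= Rmin eps R0 / 2).
  { apply Rle_trans with (INR n * (Rmin eps R0 / (2 * INR n))).
    - apply Rmult_le_compat_l; lra.
    - right. field. lra. }
  pose proof (Rmin_l eps R0). pose proof (Rmin_r eps R0).
  assert (Hball : forall t, Rabs t = d -> cnorm n (last_axis n t) < Rmin eps R0).
  { intros t Ht. eapply Rle_lt_trans.
    - apply (cnorm_le_head n _ d ltac:(lia)). intros. rewrite <- Ht. apply last_axis_Cmod.
    - rewrite last_axis_first, Cmod_0 by exact Hn. nra. }
  assert (Habs : forall t, 0 <= t -> Rabs t = t) by (intros; apply Rabs_pos_eq; assumption).
  split.
  - exists (last_axis n (- d)). unfold Omega_m. rewrite !ball_n_0.
    assert (Hd : Rabs (- d) = d) by (rewrite Rabs_Ropp; apply Habs; lra).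
    pose proof (Hball _ Hd). repeat split; try lra.
    eapply Rle_lt_trans.
    + apply (rfun_le n m A B _ d (- d) Hn ltac:(lra)).
      * intros. rewrite <- Hd at 2. apply last_axis_Cmod.
      * rewrite last_axis_last. lra.
    + rewrite last_axis_first, Cmod_0, pow_i by lia.
      assert (d ^ m <= d ^ 2) by (apply Rle_pow_le1; lra || lia).
      assert (INR (n - 1) * (d ^ m + d ^ 2) <= INR n * (2 * d ^ 2))
        by (apply Rmult_le_compat; [apply pos_INR | pose proof (pow_le d m); lra | lra | lra]).
      assert (B * (INR n * (2 * d ^ 2)) = d * (2 * B * INR n * d)) by ring.
      assert (2 * B * INR n * d <= / 2)
        by (apply Rle_trans with (2 * B * INR n * / (4 * B * INR n));
            [apply Rmult_le_compat_l; nra | right; field; nra]).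
      nra.
  - exists (last_axis n d). rewrite ball_n_0.
    split; [pose proof (Hball d (Habs d ltac:(lra))); lra|].
    intros [_ Hr]. pose proof (rfun_ge n m A B (last_axis n d) ltac:(lra)) as Hge.
    rewrite last_axis_first, Cmod_0, pow_i, last_axis_last in Hge by lia. lra.
Qed.

Section Estimates.

Variables (n m : nat) (R0 A B k : R).
Hypotheses (Hn : (2 <= n)%nat) (Hm : (2 <= m)%nat) (HR0 : 0 < R0) (HA : 0 < A) (HB : 0 < B)
  (Hk : 0 < k < 1).

(* The bound on [rfun] supplied by [rfun_le] at a point within [eta] of a point of
   [Lambda k] with norm [s], whose first coordinate has modulus [x]. *)
Definition majorant (s eta x : R) : R :=
  - k * s + eta - A * x ^ m
  + B * (INR (n - 1) * (s + eta) ^ m + (s + eta) * (x + INR (n - 1) * (s + eta))).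

(* [c] is the curvature of the analytic disc in the [z_1]-direction, [mu] its relative speed. *)
Variables (c mu q0 : R).
Hypotheses (Hc : 0 < c <= 1) (HBc : 2 * B * c <= k / 4) (HcR0 : c <= R0 / 2)
  (Hmu : 0 < mu <= c / 4)
  (HmuA : mu * (1 + B * INR n * 2 ^ m + 2 * B * (c + 2 * INR n)) <= A * (c / 2) ^ m / 2)
  (Hq0 : 0 < q0 <= 1) (HBq0 : B * q0 * (2 ^ m * INR n + 4 * INR n) <= k / 4)
  (Hq0R0 : 8 * INR n * q0 <= R0).

Lemma majorant_neg_near s eta x q : 0 < s <= q -> q <= q0 ->
  0 <= eta <= k * s / 4 -> 0 <= x <= c + 2 * q -> majorant s eta x < 0.
Proof.
  intros Hs Hq Heta Hx. unfold majorant.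
  pose proof (INR_pred_add1 n ltac:(lia)) as HN. pose proof (pos_INR (n - 1)).
  assert (H2m : 0 < 2 ^ m) by (apply pow_lt; lra).
  assert (Hbeta : s + eta <= 2 * s) by nra.
  assert (Hpow : (s + eta) ^ m <= 2 ^ m * (q * s)).
  { apply Rle_trans with ((2 * s) ^ m); [apply pow_incr; lra|].
    rewrite Rpow_mult_distr. apply Rmult_le_compat_l; [lra|].
    apply Rle_trans with (s ^ 2); [apply Rle_pow_le1; lra || lia | simpl; nra]. }
  assert (Hsum : INR (n - 1) * (s + eta) ^ m <= INR n * (2 ^ m * (q * s)))
    by (apply Rmult_le_compat; [lra | apply pow_le; lra | lra | exact Hpow]).
  assert (Hprod : (s + eta) * (x + INR (n - 1) * (s + eta)) <= 2 * s * (c + 2 * INR n * q))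
    by (apply Rmult_le_compat; nra).
  assert (HBq : B * q * (2 ^ m * INR n + 4 * INR n) <= k / 4).
  { eapply Rle_trans; [|exact HBq0].
    apply Rmult_le_compat_r; [nra | apply Rmult_le_compat_l; lra]. }
  assert (B * (INR (n - 1) * (s + eta) ^ m + (s + eta) * (x + INR (n - 1) * (s + eta)))
          <= s * (B * q * (2 ^ m * INR n + 4 * INR n) + 2 * B * c)).
  { apply Rle_trans with (B * (INR n * (2 ^ m * (q * s)) + 2 * s * (c + 2 * INR n * q)));
      [apply Rmult_le_compat_l; lra | right; ring]. }
  assert (0 <= A * x ^ m) by (apply Rmult_le_pos; [lra | apply pow_le; lra]).
  nra.
Qed.

Lemma majorant_neg_far s eta x T : 0 < T <= 1 -> 0 < s <= mu * T -> 0 <= eta <= mu * T ->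
  0 <= x <= c + 2 -> (c / 2) ^ m * T <= x ^ m -> majorant s eta x < 0.
Proof.
  intros HT Hs Heta Hx HxT. unfold majorant.
  pose proof (INR_pred_add1 n ltac:(lia)) as HN. pose proof (pos_INR (n - 1)).
  assert (H2m : 0 < 2 ^ m) by (apply pow_lt; lra).
  assert (HmuT : mu * T <= 1 / 4) by nra.
  assert (Hpow : (s + eta) ^ m <= 2 ^ m * (mu * T)).
  { apply Rle_trans with ((2 * (mu * T)) ^ m); [apply pow_incr; lra|].
    rewrite Rpow_mult_distr. apply Rmult_le_compat_l; [lra|].
    rewrite <- (pow_1 (mu * T)) at 2. apply Rle_pow_le1; [nra | lia]. }
  assert (Hsum : INR (n - 1) * (s + eta) ^ m <= INR n * (2 ^ m * (mu * T)))
    by (apply Rmult_le_compat; [lra | apply pow_le; lra | lra | exact Hpow]).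
  assert (Hprod : (s + eta) * (x + INR (n - 1) * (s + eta)) <= 2 * (mu * T) * (c + 2 * INR n))
    by (apply Rmult_le_compat; nra).
  assert (eta + B * (INR (n - 1) * (s + eta) ^ m + (s + eta) * (x + INR (n - 1) * (s + eta)))
          <= mu * (1 + B * INR n * 2 ^ m + 2 * B * (c + 2 * INR n)) * T).
  { apply Rle_trans
      with (mu * T + B * (INR n * (2 ^ m * (mu * T)) + 2 * (mu * T) * (c + 2 * INR n)));
      [apply Rplus_le_compat; [lra | apply Rmult_le_compat_l; lra] | right; ring]. }
  assert (mu * (1 + B * INR n * 2 ^ m + 2 * B * (c + 2 * INR n)) * T
          <= A * (c / 2) ^ m / 2 * T) by (apply Rmult_le_compat_r; lra).
  assert (A * ((c / 2) ^ m * T) <= A * x ^ m) by (apply Rmult_le_compat_l; lra).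
  assert (0 < A * ((c / 2) ^ m * T))
    by (apply Rmult_lt_0_compat; [lra | apply Rmult_lt_0_compat; [apply pow_lt|]; lra]).
  nra.
Qed.

(* Either the disc moves slowly compared with [q], and the [- k |z|] term of [Re z_n] wins,
   or [|t|] is large, and the [- A |z_1|^m] term generated by the curvature [c] wins. *)
Lemma majorant_neg_disc q tau x : 0 < q <= q0 -> 0 <= tau <= 1 ->
  0 <= x <= c + 2 * q -> c * tau ^ 2 - q ^ (2 * m) - tau * (k * mu / 4) * q ^ (2 * m - 1) <= x ->
  majorant (q ^ (2 * m)) (tau * (k * mu / 4) * q ^ (2 * m - 1)) x < 0.
Proof.
  intros Hq Htau Hx Hx_low.
  assert (Hp : 0 < q ^ (2 * m - 1)) by (apply pow_lt; lra).
  assert (Hs : q ^ (2 * m) = q * q ^ (2 * m - 1)) by (apply pow_pred; lia).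
  assert (Hp1 : q ^ (2 * m - 1) <= 1) by (rewrite <- (pow1 (2 * m - 1)); apply pow_incr; lra).
  destruct (Rle_or_lt (mu * tau) q) as [Hslow|Hfast].
  - apply (majorant_neg_near _ _ _ q); try lra.
    + split; [apply pow_lt; lra | rewrite Hs; nra].
    + assert (0 <= tau * (k * mu / 4)) by (apply Rmult_le_pos; nra).
      assert (0 <= k * q ^ (2 * m - 1) / 4) by (apply Rmult_le_pos; nra).
      split; [apply Rmult_le_pos; lra | rewrite Hs; nra].
  - assert (Htau0 : 0 < tau) by nra.
    assert (HT : 0 < tau ^ (2 * m) <= tau ^ 2)
      by (split; [apply pow_lt; lra | apply Rle_pow_le1; lra || lia]).
    assert (HT1 : tau ^ 2 <= 1) by (simpl; nra).
    assert (Hmu_pow : forall p, (1 <= p)%nat -> mu ^ p <= mu)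
      by (intros p Hp1'; rewrite <- (pow_1 mu) at 2; apply Rle_pow_le1; lra || lia).
    assert (Hqpow : forall p, (1 <= p)%nat -> q ^ p <= mu * tau ^ p).
    { intros p Hp1'. apply Rle_trans with ((mu * tau) ^ p); [apply pow_incr; lra|].
      rewrite Rpow_mult_distr. apply Rmult_le_compat_r; [apply pow_le; lra | auto]. }
    assert (Hs_far : q ^ (2 * m) <= mu * tau ^ (2 * m)) by (apply Hqpow; lia).
    assert (Heta_far : tau * (k * mu / 4) * q ^ (2 * m - 1) <= mu * tau ^ (2 * m)).
    { rewrite (pow_pred tau (2 * m)) by lia.
      pose proof (Hqpow (2 * m - 1)%nat ltac:(lia)).
      apply Rle_trans with (tau * q ^ (2 * m - 1)).
      - apply Rmult_le_compat_r; [lra | nra].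
      - replace (mu * (tau * tau ^ (2 * m - 1))) with (tau * (mu * tau ^ (2 * m - 1))) by ring.
        apply Rmult_le_compat_l; lra. }
    apply (majorant_neg_far _ _ _ (tau ^ (2 * m))); try lra.
    + split; [apply pow_lt|]; lra.
    + split; [apply Rmult_le_pos; [apply Rmult_le_pos|]|]; nra.
    + rewrite pow_mult, <- Rpow_mult_distr. apply pow_incr. nra.
Qed.

Lemma mem_Omega u s eta q : 0 < q <= q0 ->
  (forall j, (1 <= j <= n - 1)%nat -> Cmod (u j) <= s + eta) ->
  Re (u (n - 1)%nat) <= - k * s + eta -> 0 <= s + eta <= 2 * q ->
  Cmod (u 0%nat) <= c + 2 * q -> majorant s eta (Cmod (u 0%nat)) < 0 ->
  Omega_m n m R0 A B u.
Proof.
  intros Hq Hb Hre Hbeta Hx Hneg. split.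
  - rewrite ball_n_0. eapply Rle_lt_trans; [apply (cnorm_le_head n u (s + eta)); [lia | exact Hb]|].
    pose proof (INR_pred_add1 n ltac:(lia)). pose proof (pos_INR (n - 1)).
    assert (INR (n - 1) * (s + eta) <= INR (n - 1) * (2 * q)) by (apply Rmult_le_compat_l; lra).
    assert (INR n * q <= INR n * q0) by (apply Rmult_le_compat_l; lra).
    nra.
  - eapply Rle_lt_trans; [|exact Hneg].
    apply (rfun_le n m A B u (s + eta) _ Hn ltac:(lra) Hb Hre).
Qed.

Section Point.

Variables (q : R) (z : Cn).
Hypotheses (Hq : 0 < q <= q0) (Hz : cnorm n z = q ^ (2 * m)) (HzL : Lambda n k z).

Lemma point_norm_le_scale : q ^ (2 * m) <= q.
Proof. rewrite <- (pow_1 q) at 2. apply Rle_pow_le1; lra || lia. Qed.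

Lemma point_norm_pos : 0 < q ^ (2 * m).
Proof. apply pow_lt. lra. Qed.

Lemma point_Cmod_le j : (j < n)%nat -> Cmod (z j) <= q ^ (2 * m).
Proof. rewrite <- Hz. apply Cmod_le_cnorm. Qed.

Lemma point_Re_last : Re (z (n - 1)%nat) < - k * q ^ (2 * m).
Proof. unfold Lambda in HzL. rewrite Hz in HzL. lra. Qed.

Lemma ball_subset_Omega u : (forall j, (j < n)%nat -> Cmod (u j - z j) <= k * q ^ (2 * m) / 4) ->
  Omega_m n m R0 A B u.
Proof.
  intro Hu. pose proof point_norm_pos. pose proof point_norm_le_scale.
  assert (Huj : forall j, (j < n)%nat -> Cmod (u j) <= q ^ (2 * m) + k * q ^ (2 * m) / 4).
  { intros j Hj. replace (u j) with (z j + (u j - z j))%C by ring.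
    eapply Rle_trans; [apply Cmod_triangle|].
    pose proof (point_Cmod_le j Hj). pose proof (Hu j Hj). lra. }
  apply (mem_Omega u (q ^ (2 * m)) (k * q ^ (2 * m) / 4) q Hq).
  - intros j Hj. apply Huj. lia.
  - replace (u (n - 1)%nat) with (z (n - 1)%nat + (u (n - 1)%nat - z (n - 1)%nat))%C by ring.
    eapply Rle_trans; [apply Re_add_le_Cmod|].
    pose proof (Hu (n - 1)%nat ltac:(lia)). pose proof point_Re_last. lra.
  - nra.
  - pose proof (Huj 0%nat ltac:(lia)). nra.
  - apply (majorant_neg_near _ _ _ q); try lra.
    + nra.
    + split; [apply Cmod_ge_0 | pose proof (Huj 0%nat ltac:(lia)); nra].
Qed.

Lemma dist_bd_bounds : exists d, dist_bd n (Omega_m n m R0 A B) z = Finite d /\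
  k * q ^ (2 * m) / 4 <= d <= q ^ (2 * m).
Proof.
  pose proof point_norm_pos. set (eta := k * q ^ (2 * m) / 4).
  unfold dist_bd. destruct (Glb_Rbar_correct
    (fun x => exists w, boundary n (Omega_m n m R0 A B) w /\ x = cnorm n (csub z w)))
    as [Hlb Hglb].
  assert (Hle : Rbar_le (Glb_Rbar (fun x => exists w, boundary n (Omega_m n m R0 A B) w
                                               /\ x = cnorm n (csub z w))) (q ^ (2 * m))).
  { apply Hlb. exists (fun _ => 0%C). split; [apply boundary_origin; assumption|].
    rewrite <- Hz. f_equal. apply functional_extensionality. intro j. unfold csub. ring. }
  assert (Hge : Rbar_le eta (Glb_Rbar (fun x => exists w, boundary n (Omega_m n m R0 A B) w
                                                  /\ x = cnorm n (csub z w)))).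
  { apply Hglb. intros x [w [Hw ->]]. simpl.
    destruct (Rle_or_lt eta (cnorm n (csub z w))) as [|Hlt]; [assumption|]. exfalso.
    destruct (Hw (eta - cnorm n (csub z w)) ltac:(lra)) as [_ [u [Hu Hout]]].
    apply Hout, ball_subset_Omega. intros j Hj. unfold ball_n in Hu.
    replace (u j - z j)%C with (csub u w j - csub z w j)%C by (unfold csub; ring).
    eapply Rle_trans; [apply Cmod_triangle|]. rewrite Cmod_opp.
    pose proof (Cmod_le_cnorm n (csub u w) j Hj). pose proof (Cmod_le_cnorm n (csub z w) j Hj).
    fold eta. lra. }
  destruct (Glb_Rbar _) as [d| |]; [| contradiction | contradiction].
  exists d. simpl in Hle, Hge. fold eta. auto.
Qed.

Lemma quadratic_disc_in_Omega V t :
  (forall j, (j < n)%nat -> Cmod (V j) <= k * mu / 4 * q ^ (2 * m - 1)) -> Cmod t < 1 ->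
  Omega_m n m R0 A B (quadratic_disc z V c t).
Proof.
  intros HV Ht. set (p := q ^ (2 * m - 1)) in *. set (tau := Cmod t) in *.
  pose proof point_norm_le_scale.
  assert (Htau : 0 <= tau < 1) by (split; [apply Cmod_ge_0 | exact Ht]).
  assert (Hp : 0 < p <= q)
    by (split; [apply pow_lt | unfold p; rewrite <- (pow_1 q) at 2; apply Rle_pow_le1]; lra || lia).
  assert (Hkmu : 0 < k * mu / 4 <= 1) by (split; nra).
  assert (HtV : forall j, (j < n)%nat -> Cmod (t * V j) <= tau * (k * mu / 4) * p)
    by (intros; rewrite Cmod_mult, Rmult_assoc; apply Rmult_le_compat_l; auto; lra).
  assert (Heta : 0 <= tau * (k * mu / 4) * p <= q).
  { assert (0 <= tau * (k * mu / 4) <= 1) by (split; [apply Rmult_le_pos|]; nra).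
    split; [apply Rmult_le_pos|]; nra. }
  assert (Htau2 : c * tau ^ 2 <= c).
  { assert (tau ^ 2 <= 1) by (rewrite <- (pow1 2); apply pow_incr; lra). nra. }
  pose proof (point_Cmod_le 0 ltac:(lia)). pose proof (HtV 0%nat ltac:(lia)).
  pose proof (quadratic_disc_first_Cmod z V c t ltac:(lra)) as Hfirst. fold tau in Hfirst.
  assert (Hx : Cmod (quadratic_disc z V c t 0%nat) <= c + 2 * q) by lra.
  apply (mem_Omega _ (q ^ (2 * m)) (tau * (k * mu / 4) * p) q Hq).
  - intros j Hj. rewrite quadratic_disc_tail by lia. eapply Rle_trans; [apply Cmod_triangle|].
    pose proof (point_Cmod_le j ltac:(lia)). pose proof (HtV j ltac:(lia)). lra.
  - rewrite quadratic_disc_tail by lia. eapply Rle_trans; [apply Re_add_le_Cmod|].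
    pose proof (HtV (n - 1)%nat ltac:(lia)). pose proof point_Re_last. lra.
  - lra.
  - exact Hx.
  - apply majorant_neg_disc; fold p; try lra. split; [apply Cmod_ge_0 | exact Hx].
Qed.

Lemma kobayashi_le_scaled K X : 0 < K -> cnorm n X <= K * Cmod (X (n - 1)%nat) ->
  Rbar_le (kobayashi n (Omega_m n m R0 A B) z X)
    (Finite (K * Cmod (X (n - 1)%nat) / (k * mu / 4 * q ^ (2 * m - 1)))).
Proof.
  intros HK HX. set (e := k * mu / 4 * q ^ (2 * m - 1)).
  assert (He : 0 < e) by (apply Rmult_lt_0_compat; [nra | apply pow_lt; lra]).
  assert (Hdisc : forall lam, 0 < lam -> lam * (K * Cmod (X (n - 1)%nat)) <= e ->
            Rbar_le (kobayashi n (Omega_m n m R0 A B) z X) (Finite (/ lam))).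
  { intros lam Hlam Hle.
    apply (kobayashi_le_inv n _ z X (quadratic_disc z (fun j => (RtoC lam * X j)%C) c) lam Hlam).
    - apply quadratic_disc_holo.
    - intros w Hw. apply quadratic_disc_in_Omega; [|exact Hw].
      intros j Hj. fold e. rewrite Cmod_mult, Cmod_R, Rabs_pos_eq by lra.
      pose proof (Cmod_le_cnorm n X j Hj).
      apply Rle_trans with (lam * (K * Cmod (X (n - 1)%nat))); [apply Rmult_le_compat_l|]; lra.
    - intros. apply quadratic_disc_0.
    - intros. apply quadratic_disc_derive_0. }
  destruct (Req_dec (Cmod (X (n - 1)%nat)) 0) as [H0|Hpos].
  - rewrite H0, Rmult_0_r, Rdiv_0_l. apply Rbar_le_0_of_le_inv.
    intros lam Hlam. apply Hdisc; [exact Hlam|]. rewrite H0. lra.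
  - pose proof (Cmod_ge_0 (X (n - 1)%nat)).
    replace (K * Cmod (X (n - 1)%nat) / e) with (/ (e / (K * Cmod (X (n - 1)%nat))))
      by (field; split; [lra | nra]).
    apply Hdisc.
    + apply Rdiv_lt_0_compat; nra.
    + right. field. split; [lra | nra].
Qed.

Lemma kobayashi_le_dist_bd K X : 0 < K -> cnorm n X <= K * Cmod (X (n - 1)%nat) ->
  Rbar_le (kobayashi n (Omega_m n m R0 A B) z X)
    (Finite (K / (k * mu / 4) * Cmod (X (n - 1)%nat)
             / Rpower (real (dist_bd n (Omega_m n m R0 A B) z)) (1 - 1 / (2 * INR m)))).
Proof.
  intros HK HX. destruct dist_bd_bounds as (d & Hd & Hdq). rewrite Hd. simpl real.
  assert (Hkmu : 0 < k * mu / 4) by nra.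
  assert (Hd0 : 0 < d) by (pose proof point_norm_pos; nra).
  assert (Hpow : Rpower d (1 - 1 / (2 * INR m)) <= q ^ (2 * m - 1)).
  { replace (1 / (2 * INR m)) with (/ INR (2 * m))
      by (rewrite mult_INR; simpl; field; apply not_0_INR; lia).
    apply Rpower_le_pow_pred; lra || lia. }
  assert (0 < Rpower d (1 - 1 / (2 * INR m))) by (unfold Rpower; apply exp_pos).
  eapply Rbar_le_trans; [exact (kobayashi_le_scaled K X HK HX)|]. cbn [Rbar_le].
  apply Rle_trans with (K / (k * mu / 4) * Cmod (X (n - 1)%nat) / q ^ (2 * m - 1)).
  { assert (q ^ (2 * m - 1) <> 0) by (apply pow_nonzero; lra).
    right. field. repeat split; lra. }
  apply Rmult_le_compat_l.
  - apply Rmult_le_pos; [apply Rlt_le, Rdiv_lt_0_compat; lra | apply Cmod_ge_0].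
  - apply Rinv_le_contravar; assumption.
Qed.

End Point.

End Estimates.

Theorem proposition2p4 (n m : nat) (R0 A B k K : R) :
  (2 <= n)%nat -> (2 <= m)%nat ->
  0 < R0 -> 0 < A -> 0 < B -> 0 < k < 1 -> 0 < K ->
  exists R1 C0 : R, 0 < R1 /\ 0 < C0 /\
    forall z X : Cn,
      ball_n n (fun _ => 0%C) R1 z -> Lambda n k z ->
      cnorm n X <= K * Cmod (X (n - 1)%nat) ->
      Rbar_le (kobayashi n (Omega_m n m R0 A B) z X)
        (Finite (C0 * Cmod (X (n - 1)%nat)
                 / Rpower (real (dist_bd n (Omega_m n m R0 A B) z))
                          (1 - 1 / (2 * INR m)))).
Proof.
  intros Hn Hm HR0 HA HB Hk HK.
  destruct (exists_disc_width B k R0) as (c & Hc & HBc & HcR0); try lra.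
  destruct (exists_disc_speed n m A B c) as (mu & Hmu & HmuA); try lra.
  destruct (exists_small_scale n m B k R0) as (q0 & Hq0 & HBq0 & Hq0R0); try lra; try lia.
  exists (q0 ^ (2 * m)), (K / (k * mu / 4)).
  split; [apply pow_lt; lra | split; [apply Rdiv_lt_0_compat; nra |]].
  intros z X Hball HL HX. rewrite ball_n_0 in Hball.
  set (q := Rpower (cnorm n z) (/ INR (2 * m))).
  assert (Hqz : cnorm n z = q ^ (2 * m))
    by (symmetry; apply Rpower_inv_pow; [apply (Lambda_cnorm_pos n k); [lia | exact HL] | lia]).
  assert (Hq : 0 < q <= q0).
  { split; [unfold q, Rpower; apply exp_pos|].
    destruct (Rle_or_lt q q0) as [|Hlt]; [assumption|].
    assert (q0 ^ (2 * m) <= q ^ (2 * m)) by (apply pow_incr; lra). lra. }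
  exact (kobayashi_le_dist_bd n m R0 A B k Hn Hm HR0 HA HB Hk c mu q0 Hc HBc HcR0 Hmu HmuA
           Hq0 HBq0 Hq0R0 q z Hq Hqz HL K X HK HX).
Qed.
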